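(* Let $0<\varepsilon\le\frac1{12}$ and let $(x,y,z,C)\in\tilde Q(r)$ with $r\ge5$, and let $d(j_1,j_2):=1-y_{j_1,j_2}$. For $j\in J$ define $t^*_j:=\min\{t'\in[T]:\sum_{i\in[m]}\sum_{t=1}^{t'}z_{j,i,t}\ge1-\varepsilon\}$. Let $U\subseteq J$ with $\max_{u,v\in U}d(u,v)\le\varepsilon$, enumerate $U=\{j_1,\dots,j_{|U|}\}$ so that $t^*_{j_1}\le\dots\le t^*_{j_{|U|}}$ (ties broken arbitrarily), and process these jobs consecutively on one machine in this order in slots $1,2,\dots,|U|$, so that $j_k$ has completion time $C^A_{j_k}=k$. Then $C^A_j\le 2t^*_j$ for every $j\in U$.
   Context: Fix a finite set $J$ of unit-length jobs, a partial order $\prec$ on $J$, and $c,S,m\in\mathbb N$; let $T:=Sc$, $[T]=\{1,\dots,T\}$, and for $s\in\{0,\dots,S-1\}$ let $I_s:=\{cs+1,\dots,c(s+1)\}$. Sherali–Adams lift: for a polytope $K=\{x\in\mathbb R^{V}:Ax\ge b\}$ on a finite index set $V$ and $r\ge0$, $SA_r(K)$ is the set of vectors $y$ indexed by subsets of $V$ of size at most $r+1$ with $y_\emptyset=1$ and, for every row $\ell$ and all $I,J'\subseteq V$ with $|I|+|J'|\le r$, $\sum_{H\subseteq J'}(-1)^{|H|}\big(\sum_{v\in V}A_{\ell,v}y_{I\cup H\cup\{v\}}-b_\ell y_{I\cup H}\big)\ge0$. Let $\tilde K$ be the polytope in variables $z_{j,i,t}$ ($j\in J,i\in[m],t\in[T]$)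 and $x_{j,i,s}$ ($j\in J,i\in[m],s\in\{0,\dots,S-1\}$) defined by: $\sum_{i\in[m]}\sum_{t\in[T]}z_{j,i,t}=1$ for all $j$; $\sum_{j\in J}z_{j,i,t}\le1$ for all $i,t$; $\sum_{t'<t}\sum_{i}z_{j_1,i,t'}\ge\sum_{t'\le t}\sum_i z_{j_2,i,t'}$ for all $j_1\prec j_2$ and $t\in[T]$; $\sum_{t\in I_s}z_{j,i,t}=x_{j,i,s}$ for all $j,i,s$; $0\le z_{j,i,t}\le1$. For a vector in $SA_r(\tilde K)$ write $x_{j,i,s}$, $z_{j,i,t}$ for its singleton entries and $x_{(j_1,i_1,s_1),(j_2,i_2,s_2)}$ for the entry indexed by the set of the two $x$-variables. $\tilde Q(r)$ is the set of $(x,y,z,C)$ with $(x,z)\in SA_r(\tilde K)$, $y_{j_1,j_2}=\sum_{s=0}^{S-1}\sum_{i\in[m]}x_{(j_1,i,s),(j_2,i,s)}$ for all $j_1,j_2$, $C_{j_2}\ge C_{j_1}+(1-y_{j_1,j_2})\cdot c$ for all $j_1\prec j_2$, and $C_j=\sum_{i\in[m]}\sum_{t\in[T]}z_{j,i,t}\cdot t$ for all $j$. *)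

From mathcomp Require Import all_boot all_order all_algebra.
Set Implicit Arguments. Unset Strict Implicit. Unset Printing Implicit Defensive.
Import Order.TTheory GRing.Theory Num.Theory.
Local Open Scope ring_scope.

(* A vector of SA_r(K) is indexed by subsets of V of size <= r+1; we model it
   as a function on all subsets {set V}; only entries on sets of size <= r+1
   are ever used. *)
Definition SA (R : realFieldType) (V : finType) (L : Type)
  (A : L -> V -> R) (b : L -> R) (r : nat) (y : {set V} -> R) : Prop :=
  y set0 = 1 /\
  forall (l : L) (I J' : {set V}), (#|I| + #|J'| <= r)%N ->
    0 <= \sum_(H : {set V} | H \subset J')
           (-1) ^+ #|H| *
           (\sum_(v : V) A l v * y (I :|: H :|: [set v]) - b l * y (I :|: H)).

(* ---------- The polytope K~ ----------
   Time slot t in [T] = {1..T} is encoded by the ordinal t' : 'I_T with t = t'+1.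
   Machine i in [m] is 'I_m, block s in {0..S-1} is 'I_S. *)
Definition Tn (c S : nat) : nat := (S * c)%N.

Definition var (J : finType) (m c S : nat) : finType :=
  ((J * 'I_m * 'I_(Tn c S)) + (J * 'I_m * 'I_S))%type.

Definition zv (J : finType) (m c S : nat) (j : J) (i : 'I_m) (t : 'I_(Tn c S))
  : var J m c S := inl (j, i, t).
Definition xv (J : finType) (m c S : nat) (j : J) (i : 'I_m) (s : 'I_S)
  : var J m c S := inr (j, i, s).

(* rows of the system A x >= b describing K~ (equalities = two inequalities) *)
Inductive Krow (J : finType) (m T S : nat) : Type :=
| RAsgLo of J                      (*  sum_{i,t} z_{j,i,t} >= 1 *)
| RAsgUp of J                      (* -sum_{i,t} z_{j,i,t} >= -1 *)
| RCap of 'I_m & 'I_T              (* -sum_j z_{j,i,t} >= -1 *)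
| RPrec of J & J & 'I_T
| RSlotLo of J & 'I_m & 'I_S       (*  sum_{t in I_s} z_{j,i,t} - x_{j,i,s} >= 0 *)
| RSlotUp of J & 'I_m & 'I_S       (* -sum_{t in I_s} z_{j,i,t} + x_{j,i,s} >= 0 *)
| RNonneg of J & 'I_m & 'I_T       (*  z_{j,i,t} >= 0 *)
| RLeOne of J & 'I_m & 'I_T.       (* -z_{j,i,t} >= -1 *)

Definition KA (R : realFieldType) (J : finType) (prec : rel J) (c S m : nat)
  (l : Krow J m (Tn c S) S) (v : var J m c S) : R :=
  match l, v with
  | RAsgLo j, inl (j', _, _) => (j' == j)%:R
  | RAsgUp j, inl (j', _, _) => - (j' == j)%:R
  | RCap i t, inl (_, i', t') => - ((i' == i) && (t' == t))%:R
  | RPrec j1 j2 t, inl (j, _, t') =>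
      if prec j1 j2 then
        ((j == j1) && (t' < t)%N)%:R - ((j == j2) && (t' <= t)%N)%:R
      else 0
  | RSlotLo j i s, inl (j', i', t') =>
      [&& j' == j, i' == i & (c * s <= t' < c * s + c)%N]%:R
  | RSlotLo j i s, inr (j', i', s') => - [&& j' == j, i' == i & s' == s]%:R
  | RSlotUp j i s, inl (j', i', t') =>
      - [&& j' == j, i' == i & (c * s <= t' < c * s + c)%N]%:R
  | RSlotUp j i s, inr (j', i', s') => [&& j' == j, i' == i & s' == s]%:R
  | RNonneg j i t, inl (j', i', t') => [&& j' == j, i' == i & t' == t]%:R
  | RLeOne j i t, inl (j', i', t') => - [&& j' == j, i' == i & t' == t]%:R
  | _, _ => 0
  end.

Definition Kb (R : realFieldType) (J : finType) (m T S : nat)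
  (l : Krow J m T S) : R :=
  match l with
  | RAsgLo _ => 1
  | RAsgUp _ => -1
  | RCap _ _ => -1
  | RPrec _ _ _ => 0
  | RSlotLo _ _ _ => 0
  | RSlotUp _ _ _ => 0
  | RNonneg _ _ _ => 0
  | RLeOne _ _ _ => -1
  end.

Definition SAK (R : realFieldType) (J : finType) (prec : rel J) (c S m r : nat)
  (Y : {set var J m c S} -> R) : Prop :=
  SA (@KA R J prec c S m) (@Kb R J m (Tn c S) S) r Y.

Definition zval (R : realFieldType) (J : finType) (m c S : nat)
  (Y : {set var J m c S} -> R) (j : J) (i : 'I_m) (t : 'I_(Tn c S)) : R :=
  Y [set @zv J m c S j i t].
Definition xval (R : realFieldType) (J : finType) (m c S : nat)
  (Y : {set var J m c S} -> R) (j : J) (i : 'I_m) (s : 'I_S) : R :=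
  Y [set @xv J m c S j i s].
Definition xpair (R : realFieldType) (J : finType) (m c S : nat)
  (Y : {set var J m c S} -> R) (j1 : J) (i1 : 'I_m) (s1 : 'I_S)
  (j2 : J) (i2 : 'I_m) (s2 : 'I_S) : R :=
  Y [set @xv J m c S j1 i1 s1; @xv J m c S j2 i2 s2].

Definition Qtilde (R : realFieldType) (J : finType) (prec : rel J)
  (c S m r : nat) (Y : {set var J m c S} -> R) (y : J -> J -> R) (C : J -> R)
  : Prop :=
  [/\ SAK prec r Y,
      forall j1 j2 : J,
        y j1 j2 = \sum_(s < S) \sum_(i < m) xpair Y j1 i s j2 i s,
      forall j1 j2 : J, prec j1 j2 -> C j2 >= C j1 + (1 - y j1 j2) * c%:R
    & forall j : J,
        C j = \sum_(i < m) \sum_(t < Tn c S) zval Y j i t * (t.+1)%:R].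

Definition cumz (R : realFieldType) (J : finType) (m c S : nat)
  (Y : {set var J m c S} -> R) (j : J) (t' : nat) : R :=
  \sum_(i < m) \sum_(t < Tn c S | (t < t')%N) zval Y j i t.

(* t*_j = min { t' in [T] : cumz j t' >= 1 - eps } (returns T+1 if the set is
   empty, which never happens for SA points since the z_j's sum to 1) *)
Definition tstar (R : realFieldType) (J : finType) (m c S : nat)
  (Y : {set var J m c S} -> R) (eps : R) (j : J) : nat :=
  (find (fun t' => 1 - eps <= cumz Y j t') (iota 1 (Tn c S))).+1.

From mathcomp Require Import all_boot all_order all_algebra.
From mathcomp Require Import zify lra.
Import Order.TTheory GRing.Theory Num.Theory.
Local Open Scope ring_scope.
Set Implicit Arguments. Unset Strict Implicit.

(* Fix j in U and t0 := t*_j, and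
   let B be the jobs of U with t*_u <= t0.  Since the schedule is sorted by t*,
   j is preceded only by jobs of B, so C^A_j = index j + 1 <= |B|.  To bound
   |B| we use the level-1 Sherali-Adams lift: conditioning on "u in slot t of
   machine i" gives a fractional schedule, so the shared mass
   W(u) = P[u runs on some machine i before t0 and j also runs on i]
   satisfies
   (A) W(u) >= (1 - eps) - d(u, j) >= 1 - 2 eps for u in B, because u has mass
       1 - eps before t*_u <= t0, and y_{uj} <= P[u, j on the same machine];
   (B) sum_{u in B} W(u) <= t0, by the lifted capacity constraints (at most one
       job per slot) summed over the t0 slots before t0.
   Hence |B| (1 - 2 eps) <= t0, and eps <= 1/4 gives |B| <= 2 t0. *)

Lemma sum_delta (R : realFieldType) (T : finType) (a : T) (X : T -> R) :
  \sum_(x : T) (x == a)%:R * X x = X a.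
Proof.
rewrite (bigD1 a) //= eqxx mul1r big1 ?addr0 // => x /negPf ->.
by rewrite mul0r.
Qed.

Lemma sum_opp_coef (R : realFieldType) (T : finType) (A A' G : T -> R) :
  (forall v, A' v = - A v) -> \sum_v A' v * G v = - \sum_v A v * G v.
Proof.
by move=> AA'; rewrite -sumrN; apply: eq_bigr => v _; rewrite AA' mulNr.
Qed.

Lemma ler_sum_pred (R : realFieldType) (T : finType) (P Q : pred T) (F : T -> R) :
  (forall x, P x -> Q x) -> (forall x, 0 <= F x) ->
  \sum_(x | P x) F x <= \sum_(x | Q x) F x.
Proof.
move=> PQ F0; rewrite big_mkcond [leRHS]big_mkcond /=.
by apply: ler_sum => x _; case: ifP => [/PQ -> //|_]; case: ifP.
Qed.

(* The blocks [c s, c s + c) are pairwise disjoint, so summing a nonnegative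
   function block by block counts every slot at most once. *)
Lemma sum_blocks_le (R : realFieldType) (c S T : nat) (H : 'I_T -> R) :
  (forall t, 0 <= H t) ->
  \sum_(s < S) \sum_(t < T | (c * s <= t < c * s + c)%N) H t <= \sum_t H t.
Proof.
move=> H0; under eq_bigr do rewrite big_mkcond.
rewrite exchange_big /=; apply: ler_sum => t _.
case: (pickP (fun s : 'I_S => (c * s <= t < c * s + c)%N)) => [s ts | none].
  rewrite (bigD1 s) //= ts big1 ?addr0 // => s' s's; case: ifP => // ts'.
  by case/eqP: s's; apply: val_inj; move: ts ts' => /andP[? ?] /andP[? ?] /=; nia.
by rewrite big1 // => s _; rewrite none.
Qed.

Lemma count_slots_below (R : realFieldType) (T t0 : nat) :
  \sum_(t < T | (t < t0)%N) (1 : R) <= t0%:R.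
Proof.
case: (leqP t0 T) => hT.
  by rewrite -(big_ord_widen _ (fun=> 1)) // sumr_const card_ord.
rewrite (eq_bigl xpredT) => [|t]; last exact: ltn_trans (ltn_ord t) hT.
by rewrite sumr_const card_ord ler_nat ltnW.
Qed.

(* Lifting one row of A x >= b by a set I of at most r variables (the J' = {}
   instance of the Sherali-Adams inequalities): the vector v |-> y (I u {v})
   satisfies the row with right-hand side scaled by y I. *)
Lemma SA_row_lift (R : realFieldType) (V : finType) (L : Type) (A : L -> V -> R)
  (b : L -> R) (r : nat) (y : {set V} -> R) (l : L) (I : {set V}) :
  SA A b r y -> (#|I| <= r)%N ->
  0 <= \sum_v A l v * y (I :|: [set v]) - b l * y I.
Proof.
move=> [_ Hy] hI; have := Hy l I set0; rewrite cards0 addn0 => /(_ hI).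
rewrite (big_pred1 set0) => [|H]; last exact: subset0.
by rewrite cards0 expr0 mul1r !setU0.
Qed.

Section RowForms.
Variables (R : realFieldType) (J : finType) (prec : rel J) (c S m : nat).
Local Notation V := (var J m c S).
Local Notation zv := (@zv J m c S).
Local Notation xv := (@xv J m c S).
Local Notation KA := (@KA R J prec c S m).
Implicit Types (G : V -> R) (j : J) (i : 'I_m) (t : 'I_(Tn c S)) (s : 'I_S).

Lemma sum_var (F : V -> R) :
  \sum_v F v = \sum_j \sum_(i < m) \sum_(t < Tn c S) F (zv j i t) +
               \sum_j \sum_(i < m) \sum_(s < S) F (xv j i s).
Proof.
rewrite big_sumType; congr (_ + _); rewrite !pair_bigA.
all: by apply: eq_bigr => -[[]].
Qed.

Lemma sum_var_z (F : V -> R) : (forall j i s, F (xv j i s) = 0) ->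
  \sum_v F v = \sum_j \sum_(i < m) \sum_(t < Tn c S) F (zv j i t).
Proof.
move=> Fx0; rewrite sum_var [X in _ + X]big1 ?addr0 // => j _.
by rewrite big1 // => i _; rewrite big1.
Qed.

Lemma row_nonneg j i t G :
  \sum_v KA (@RNonneg J m (Tn c S) S j i t) v * G v = G (zv j i t).
Proof.
rewrite -(sum_delta (zv j i t)); apply: eq_bigr => -[[[j' i'] t']|] _ //=.
by rewrite -sum_eqE /= !xpair_eqE andbA.
Qed.

Lemma row_assign j G :
  \sum_v KA (@RAsgLo J m (Tn c S) S j) v * G v =
  \sum_(i < m) \sum_(t < Tn c S) G (zv j i t).
Proof.
rewrite sum_var_z => [|*]; last by rewrite mul0r.
rewrite -(sum_delta j (fun j' => \sum_i \sum_t G (zv j' i t))).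
apply: eq_bigr => j' _; rewrite mulr_sumr.
by apply: eq_bigr => i _; rewrite mulr_sumr.
Qed.

Lemma row_assign_up j G :
  \sum_v KA (@RAsgUp J m (Tn c S) S j) v * G v =
  - \sum_(i < m) \sum_(t < Tn c S) G (zv j i t).
Proof.
rewrite (@sum_opp_coef _ _ (KA (@RAsgLo J m (Tn c S) S j))) ?row_assign //.
by case=> -[[]] //= *; rewrite oppr0.
Qed.

Lemma row_cap i t G :
  \sum_v KA (@RCap J m (Tn c S) S i t) v * G v = - \sum_j G (zv j i t).
Proof.
rewrite sum_var_z => [|*]; last by rewrite mul0r.
rewrite -sumrN; apply: eq_bigr => j _; rewrite pair_bigA /=.
rewrite -(sum_delta (i, t) (fun p => G (zv j p.1 p.2))) -sumrN.
by apply: eq_bigr => -[i' t'] _; rewrite /= xpair_eqE mulNr.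
Qed.

Lemma row_slot j i s G :
  \sum_v KA (@RSlotLo J m (Tn c S) S j i s) v * G v =
  \sum_(t < Tn c S | (c * s <= t < c * s + c)%N) G (zv j i t) - G (xv j i s).
Proof.
rewrite sum_var; congr (_ + _).
  rewrite pair_bigA /= -(sum_delta (j, i) (fun p =>
    \sum_(t < Tn c S | (c * s <= t < c * s + c)%N) G (zv p.1 p.2 t))).
  apply: eq_bigr => -[j' i'] _ /=; rewrite xpair_eqE [in RHS]big_mkcond mulr_sumr.
  apply: eq_bigr => t _.
  by case: (j' == j) (i' == i) (c * s <= t)%N (t < c * s + c)%N => [] [] [] [];
    rewrite /= ?mul0r ?mul1r ?mulr0.
rewrite pair_bigA pair_bigA /=.
rewrite -(sum_delta (j, i, s) (fun q => G (xv q.1.1 q.1.2 q.2))) -sumrN.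
by apply: eq_bigr => -[[j' i'] s'] _; rewrite /= !xpair_eqE mulNr andbA.
Qed.

Lemma row_slot_up j i s G :
  \sum_v KA (@RSlotUp J m (Tn c S) S j i s) v * G v =
  - (\sum_(t < Tn c S | (c * s <= t < c * s + c)%N) G (zv j i t) - G (xv j i s)).
Proof.
by rewrite -row_slot; apply: sum_opp_coef => -[[[]]|[[]]] //= *; rewrite opprK.
Qed.
End RowForms.

Section LiftedConstraints.
Variables (R : realFieldType) (J : finType) (prec : rel J) (c S m r : nat).
Variables (Y : {set var J m c S} -> R) (I : {set var J m c S}).
Hypotheses (HY : SAK prec r Y) (hI : (#|I| <= r)%N).
Local Notation zv := (@zv J m c S).
Local Notation xv := (@xv J m c S).
Local Notation row_lift l := (@SA_row_lift R _ _ _ _ r Y l I HY hI).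

Lemma lift_nonneg u i t : 0 <= Y (I :|: [set zv u i t]).
Proof.
have := row_lift (@RNonneg J m (Tn c S) S u i t).
by rewrite row_nonneg mul0r subr0.
Qed.

Lemma lift_assign u :
  \sum_(i < m) \sum_(t < Tn c S) Y (I :|: [set zv u i t]) = Y I.
Proof.
have := row_lift (@RAsgLo J m (Tn c S) S u).
have := row_lift (@RAsgUp J m (Tn c S) S u).
rewrite row_assign row_assign_up /= => ? ?; lra.
Qed.

Lemma lift_cap i t : \sum_u Y (I :|: [set zv u i t]) <= Y I.
Proof.
by have := row_lift (@RCap J m (Tn c S) S i t); rewrite row_cap /=; lra.
Qed.

Lemma lift_slot u i (s : 'I_S) :
  \sum_(t < Tn c S | (c * s <= t < c * s + c)%N) Y (I :|: [set zv u i t]) =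
  Y (I :|: [set xv u i s]).
Proof.
have := row_lift (@RSlotLo J m (Tn c S) S u i s).
have := row_lift (@RSlotUp J m (Tn c S) S u i s).
rewrite row_slot row_slot_up /= => ? ?; lra.
Qed.
End LiftedConstraints.

Section SingleMachineBound.
Variables (R : realFieldType) (J : finType) (prec : rel J) (c S m r : nat).
Variable (Y : {set var J m c S} -> R).
Hypotheses (HY : SAK prec r Y) (r_ge1 : (1 <= r)%N).
Local Notation zv := (@zv J m c S).
Local Notation xv := (@xv J m c S).
Local Notation T := (Tn c S).

Let card0_le : (#|@set0 (var J m c S)| <= r)%N. Proof. by rewrite cards0. Qed.
Let card1_le w : (#|[set w : var J m c S]| <= r)%N. Proof. by rewrite cards1. Qed.

Lemma z_nonneg u i t : 0 <= zval Y u i t.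
Proof. by have := lift_nonneg HY card0_le u i t; rewrite set0U. Qed.

Lemma z_assign u : \sum_(i < m) \sum_(t < T) zval Y u i t = 1.
Proof.
rewrite -[RHS](proj1 HY) -(lift_assign HY card0_le u).
by apply: eq_bigr => i _; apply: eq_bigr => t _; rewrite set0U.
Qed.

Lemma cumz_mono u a b : (a <= b)%N -> cumz Y u a <= cumz Y u b.
Proof.
move=> ab; apply: ler_sum => i _.
by apply: ler_sum_pred => [t /leq_trans/(_ ab)|t] //; apply: z_nonneg.
Qed.

Lemma cumz_full u b : (T <= b)%N -> cumz Y u b = 1.
Proof.
move=> Tb; rewrite -(z_assign u); apply: eq_bigr => i _.
by apply: eq_bigl => t; exact: leq_trans (ltn_ord t) Tb.
Qed.

(* By definition of t*_u, by time t*_u job u has received mass >= 1 - eps;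
   when no such slot exists t*_u = T + 1 and the full mass 1 is available. *)
Lemma tstar_cumz (eps : R) u t0 : 0 <= eps -> (tstar Y eps u <= t0)%N ->
  1 - eps <= cumz Y u t0.
Proof.
move=> eps0; rewrite /tstar; set P := fun t' => 1 - eps <= cumz Y u t'.
case: (ltnP (find P (iota 1 T)) (size (iota 1 T))) => hk ht.
  have := nth_find 0%N (etrans (has_find _ _) hk : has P (iota 1 T)).
  rewrite size_iota in hk; rewrite nth_iota // add1n => /le_trans; apply.
  exact: cumz_mono.
rewrite size_iota in hk; rewrite cumz_full ?gerBl //.
exact: leq_trans hk (ltnW ht).
Qed.

Lemma pair_nonneg w u i t : 0 <= Y [set w; zv u i t].
Proof. exact: lift_nonneg HY (card1_le w) u i t. Qed.

(* Lifted mass of "u in slot t of machine i and j somewhere on machine i". *)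
Definition same_machine (u j : J) : R :=
  \sum_(i < m) \sum_(t < T) \sum_(t'' < T) Y [set zv u i t; zv j i t''].

Definition shared_before (u j : J) (t0 : nat) : R :=
  \sum_(i < m) \sum_(t < T | (t < t0)%N) \sum_(t'' < T)
    Y [set zv u i t; zv j i t''].

(* Conditioned on u in (i, t), the mass of j on machine i is at most 1. *)
Lemma same_slot_le u j i t :
  \sum_(t'' < T) Y [set zv u i t; zv j i t''] <= zval Y u i t.
Proof.
rewrite /zval -(lift_assign HY (card1_le (zv u i t)) j) (bigD1 i) //= lerDl.
by apply: sumr_ge0 => i' _; apply: sumr_ge0 => t'' _; apply: pair_nonneg.
Qed.

(* y_{uj} only counts pairs of slots of u and j inside a common block of a
   common machine, so it is at most [same_machine u j]. *)
Lemma xpair_sum_le u j :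
  \sum_(s < S) \sum_(i < m) xpair Y u i s j i s <= same_machine u j.
Proof.
have xpairE s i : xpair Y u i s j i s =
    \sum_(t < T | (c * s <= t < c * s + c)%N)
      \sum_(t'' < T | (c * s <= t'' < c * s + c)%N) Y [set zv u i t; zv j i t''].
  rewrite /xpair setUC -(lift_slot HY (card1_le (xv j i s)) u i s).
  apply: eq_bigr => t _.
  by rewrite setUC -(lift_slot HY (card1_le (zv u i t)) j i s).
under eq_bigr do under eq_bigr do rewrite xpairE.
rewrite exchange_big /=; apply: ler_sum => i _.
apply: le_trans (sum_blocks_le _ _ _) => [|t]; last first.
  by apply: sumr_ge0 => t'' _; apply: pair_nonneg.
apply: ler_sum => s _; apply: ler_sum => t _.
by apply: ler_sum_pred => // t''; apply: pair_nonneg.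
Qed.

Lemma cumz_sub_shared_le u j t0 :
  cumz Y u t0 - shared_before u j t0 <= 1 - same_machine u j.
Proof.
rewrite /cumz /shared_before /same_machine -(z_assign u) -!sumrB.
apply: ler_sum => i _; rewrite -!sumrB.
by apply: ler_sum_pred => // t; rewrite subr_ge0 same_slot_le.
Qed.

(* Claim B: machine capacity, lifted by j's slot, lets at most one unit of
   shared mass sit in each of the t0 slots before t0. *)
Lemma sum_shared_le (B : {set J}) j t0 :
  \sum_(u in B) shared_before u j t0 <= t0%:R.
Proof.
apply: le_trans (_ : \sum_u shared_before u j t0 <= _).
  apply: ler_sum_pred => // u; apply: sumr_ge0 => i _; apply: sumr_ge0 => t _.
  by apply: sumr_ge0 => t'' _; apply: pair_nonneg.
rewrite /shared_before exchange_big /=.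
apply: le_trans (_ : \sum_(i < m) \sum_(t < T | (t < t0)%N)
   \sum_(t'' < T) zval Y j i t'' <= _).
  apply: ler_sum => i _; rewrite exchange_big /=; apply: ler_sum => t _.
  rewrite exchange_big /=; apply: ler_sum => t'' _.
  under eq_bigr do rewrite setUC.
  exact: lift_cap HY (card1_le _) i t.
rewrite exchange_big /=; apply: le_trans (count_slots_below R T t0).
by apply: ler_sum => t _; rewrite z_assign.
Qed.

(* The heart of the argument: jobs of B finish (up to eps) by t0 and are
   eps-close to j, so each shares >= 1 - 2 eps with j before t0. *)
Lemma card_before_tstar (eps : R) (B : {set J}) j t0 : 0 <= eps ->
  (forall u, u \in B -> (tstar Y eps u <= t0)%N) ->
  (forall u, u \in B ->
     1 - \sum_(s < S) \sum_(i < m) xpair Y u i s j i s <= eps) ->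
  #|B|%:R * (1 - 2 * eps) <= t0%:R.
Proof.
move=> eps0 Bt Bclose; apply: le_trans (sum_shared_le B j t0).
rewrite mulr_natl -sumr_const; apply: ler_sum => u uB.
have := tstar_cumz eps0 (Bt u uB); have := cumz_sub_shared_le u j t0.
have := xpair_sum_le u j; have := Bclose u uB; lra.
Qed.
End SingleMachineBound.

Lemma index_lt_card_sorted (T : finType) (f : T -> nat) (s : seq T) (j : T) :
  uniq s -> sorted (fun a b => (f a <= f b)%N) s -> j \in s ->
  (index j s < #|[set x | (x \in s) && (f x <= f j)%N]|)%N.
Proof.
move=> s_uniq s_sorted js; have ks : (index j s < size s)%N by rewrite index_mem.
rewrite cardE -[X in (X <= _)%N](size_takel ks).
apply: uniq_leq_size => [|x xt]; first exact: take_uniq.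
have xs := mem_take xt; rewrite mem_enum inE xs /=.
have f_trans : transitive (fun a b => (f a <= f b)%N).
  by move=> b a d; apply: leq_trans.
apply: (sorted_leq_index f_trans _ s_sorted) => //.
by rewrite -ltnS -(in_take _ xs).
Qed.

Lemma le_double_of_mass (R : realFieldType) (n t0 : nat) (eps : R) :
  4 * eps <= 1 -> n%:R * (1 - 2 * eps) <= t0%:R -> (n <= 2 * t0)%N.
Proof.
move=> eps4 h; rewrite -(ler_nat R) natrM.
have : 0 <= n%:R :> R by []; nra.
Qed.

(* The hypothesis eps <= 1/12 of the theorem is only used as eps <= 1/4. *)
Lemma eps_quarter (R : realFieldType) (eps : R) :
  0 < eps -> eps <= 12%:R^-1 -> 4 * eps <= 1.
Proof.
move=> eps0; rewrite -[X in _ <= X]mulr1 ler_pdivlMl ?ltr0n //; lra.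
Qed.

Theorem mainTheorem16 (R : realFieldType) (J : finType) (prec : rel J)
  (c S m r : nat) (eps : R)
  (Y : {set var J m c S} -> R) (y : J -> J -> R) (C : J -> R)
  (U : {set J}) (sched : seq J) :
  irreflexive prec -> transitive prec ->
  0 < eps -> eps <= 12%:R^-1 ->
  (5 <= r)%N ->
  @Qtilde R J prec c S m r Y y C ->
  (forall u v, u \in U -> v \in U -> 1 - y u v <= eps) ->
  perm_eq sched (enum U) ->
  sorted (fun a b => (tstar Y eps a <= tstar Y eps b)%N) sched ->
  forall j, j \in U -> ((index j sched).+1 <= 2 * tstar Y eps j)%N.
Proof.
move=> _ _ eps0 eps12 r5 [HY Hy _ _] Uclose schedU sched_sorted j jU.
have r1 : (1 <= r)%N by apply: leq_trans r5.
have inU x : (x \in sched) = (x \in U) by rewrite (perm_mem schedU) mem_enum.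
have sched_uniq : uniq sched by rewrite (perm_uniq schedU) enum_uniq.
have js : j \in sched by rewrite inU.
apply: leq_trans (index_lt_card_sorted sched_uniq sched_sorted js) _.
apply: le_double_of_mass (eps_quarter eps0 eps12) _.
apply: (card_before_tstar (j := j) HY r1 (ltW eps0)) => u.
  by rewrite inE => /andP[].
rewrite inE => /andP[us _].
by rewrite -Hy Uclose // -inU.
Qed.
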